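(* Let $X = X(n;S)$ be a (simple, undirected) circulant graph. Then $X$ is edge-transitive if and only if it is arc-transitive. *)

From mathcomp Require Import all_boot all_order all_fingroup.
Set Implicit Arguments. Unset Strict Implicit. Unset Printing Implicit Defensive.

(* Vertices of X(n;S) are the residues 0..n-1 ('I_n), arithmetic mod n done in nat. *)

Definition circulant_set (n : nat) (S : {set 'I_n}) : Prop :=
  (forall s : 'I_n, s \in S -> val s != 0) /\
  (forall s : 'I_n, s \in S -> exists2 t : 'I_n, t \in S & val t = (n - val s) %% n).

Definition circ_adj (n : nat) (S : {set 'I_n}) : rel 'I_n :=
  fun x y => [exists s in S, val s == (val y + (n - val x)) %% n].

Definition is_aut (T : finType) (adj : rel T) (g : {perm T}) : Prop :=
  forall x y, adj (g x) (g y) = adj x y.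

Definition edge_transitive (T : finType) (adj : rel T) : Prop :=
  forall u v x y, adj u v -> adj x y ->
    exists2 g : {perm T}, is_aut adj g &
      ((g u = x /\ g v = y) \/ (g u = y /\ g v = x)).

Definition arc_transitive (T : finType) (adj : rel T) : Prop :=
  forall u v x y, adj u v -> adj x y ->
    exists2 g : {perm T}, is_aut adj g & (g u = x /\ g v = y).

From mathcomp Require Import all_boot all_order all_fingroup.
From mathcomp Require Import zify.

Set Implicit Arguments.
Unset Strict Implicit.
Unset Printing Implicit Defensive.

(* Conversely, an automorphism
   mapping the edge {u,v} onto {x,y} with the wrong orientation can be corrected
   by an automorphism swapping x and y; in X(n;S) the reflection z |-> x + y - z
   is such an automorphism, because S = -S. *)

Section EdgeArc.

Variables (T : finType) (adj : rel T).

Lemma is_autM (g h : {perm T}) :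
  is_aut adj g -> is_aut adj h -> is_aut adj (g * h)%g.
Proof. by move=> g_aut h_aut x y; rewrite !permM h_aut g_aut. Qed.

Lemma arc_transitive_edge : arc_transitive adj -> edge_transitive adj.
Proof.
move=> arc u v x y uv xy; have [g g_aut g_uv] := arc u v x y uv xy.
by exists g => //; left.
Qed.

Lemma edge_transitive_arc :
  (forall x y, adj x y -> exists2 h : {perm T}, is_aut adj h & h y = x /\ h x = y) ->
  edge_transitive adj -> arc_transitive adj.
Proof.
move=> swap edge u v x y uv xy.
have [g g_aut [g_uv | [gu gv]]] := edge u v x y uv xy; first by exists g.
have [h h_aut [hy hx]] := swap x y xy.
exists (g * h)%g; first exact: is_autM.
by rewrite !permM gu gv hy hx.
Qed.

End EdgeArc.

Lemma eqn_modDsubn (n k w m : nat) : w <= n ->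
  (k + (n - w) == m %[mod n]) = (k == m + w %[mod n]).
Proof.
move=> le_wn; rewrite -(eqn_modDr w) -addnA subnK //.
by rewrite -modnDmr modnn addn0.
Qed.

Section Circulant.

Variables (n : nat) (S : {set 'I_n}).

Lemma circ_adj_sym : circulant_set S -> symmetric (circ_adj S).
Proof.
move=> [_ S_opp].
suff adj_sym x y : circ_adj S x y -> circ_adj S y x.
  by move=> x y; apply/idP/idP; apply: adj_sym.
move=> /existsP [s /andP [sS /eqP s_yx]].
have [t tS t_opp] := S_opp s sS; apply/existsP; exists t; rewrite tS /= t_opp.
have := ltn_ord s; have := ltn_ord x; have := ltn_ord y => lt_yn lt_xn lt_sn.
have : y + (n - x) == s %[mod n] by rewrite s_yx modn_mod.
rewrite eqn_modDsubn 1?ltnW // => /eqP y_sx.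
rewrite eq_sym eqn_modDsubn 1?ltnW // -modnDmr y_sx modnDmr.
have -> : n - s + (s + x) = x + n by lia.
by rewrite modnDr.
Qed.

Hypothesis n_gt0 : 0 < n.

Definition circ_reflect_fun (c : nat) (z : 'I_n) : 'I_n :=
  Ordinal (ltn_pmod (c + (n - z)) n_gt0).

Lemma circ_reflect_sub c (a b : 'I_n) :
  (circ_reflect_fun c b + (n - circ_reflect_fun c a)) %% n = (a + (n - b)) %% n.
Proof.
apply/eqP; rewrite eqn_modDsubn /=; last exact/ltnW/ltn_pmod.
rewrite modnDmr.
have -> : a + (n - b) + (c + (n - a)) = c + (n - b) + n.
  by have := ltn_ord a; have := ltn_ord b; lia.
by rewrite modnDr modn_mod.
Qed.

Lemma circ_reflect_funK c : involutive (circ_reflect_fun c).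
Proof.
move=> z; apply: val_inj; rewrite -[RHS](modn_small (ltn_ord z)).
apply/eqP; rewrite /= eqn_modDsubn; last exact/ltnW/ltn_pmod.
rewrite modnDmr; have -> : z + (c + (n - z)) = c + n by have := ltn_ord z; lia.
by rewrite modnDr.
Qed.

Definition circ_reflect c : {perm 'I_n} := perm (can_inj (circ_reflect_funK c)).

Lemma circ_reflectE c z : circ_reflect c z = circ_reflect_fun c z.
Proof. exact: permE. Qed.

Lemma circ_reflect_aut c : circulant_set S -> is_aut (circ_adj S) (circ_reflect c).
Proof.
move=> S_circ a b; rewrite (circ_adj_sym S_circ) !circ_reflectE /circ_adj.
by apply: eq_existsb => s; rewrite circ_reflect_sub.
Qed.

Lemma circ_reflect_swap (x y : 'I_n) : circ_reflect (x + y) y = x.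
Proof.
apply: val_inj; rewrite circ_reflectE /=.
have -> : x + y + (n - y) = x + n by have := ltn_ord y; lia.
by rewrite modnDr modn_small.
Qed.

End Circulant.

Theorem mainTheorem5 (n : nat) (S : {set 'I_n}) :
  circulant_set S ->
  (edge_transitive (circ_adj S) <-> arc_transitive (circ_adj S)).
Proof.
move=> S_circ; split; last exact: arc_transitive_edge.
apply: edge_transitive_arc => x y _.
have n_gt0 : 0 < n by apply: leq_ltn_trans (ltn_ord x).
exists (circ_reflect n_gt0 (x + y)); first exact: circ_reflect_aut.
by rewrite circ_reflect_swap addnC circ_reflect_swap.
Qed.
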